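(* Let $n\ge 5$ and let $\sigma$ be a maximal simplex of $\Delta_n$ that covers all places. Then $N(v)\cap\sigma\neq\emptyset$ for every $v\in\sigma$.
   Context: $\mathbb{I}_n$ is the $n$-dimensional hypercube graph on vertex set $\{0,1\}^n$ (adjacent iff differing in exactly one coordinate), with Hamming distance $d(v,w)=\#\{i: v(i)\ne w(i)\}$, $v(i)$ the $i$-th coordinate. $\Delta_n=\mathcal{VR}(\mathbb{I}_n;3)$ is the simplicial complex whose simplices are the subsets $\sigma\subseteq\{0,1\}^n$ with $d(x,y)\le 3$ for all $x,y\in\sigma$. A simplex $\sigma$ covers all places if for each $i\in[n]=\{1,\dots,n\}$ there are $v,w\in\sigma$ with $v(i)=1$ and $w(i)=0$. $N(v)=\{v^i: i\in[n]\}$, where $v^i$ is $v$ with coordinate $i$ changed. *)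

From mathcomp Require Import all_boot.
Set Implicit Arguments. Unset Strict Implicit. Unset Printing Implicit Defensive.

(* Vertices of the n-cube I_n: functions [n] -> {0,1}, coordinates indexed by 'I_n
   (index i : 'I_n stands for place i+1). *)
Definition cube (n : nat) := {ffun 'I_n -> bool}.

Definition hdist n (v w : cube n) : nat := #|[set i : 'I_n | v i != w i]|.

(* simplices of Delta_n = VR(I_n; 3) : sets of vertices with pairwise distance <= 3 *)
Definition is_simplex n (s : {set cube n}) : Prop :=
  forall x y, x \in s -> y \in s -> hdist x y <= 3.

Definition is_maximal_simplex n (s : {set cube n}) : Prop :=
  is_simplex s /\ (forall t : {set cube n}, is_simplex t -> s \subset t -> t = s).

Definition covers_all_places n (s : {set cube n}) : Prop :=
  forall i : 'I_n, exists v, exists w, [/\ v \in s, w \in s, v i = true & w i = false].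

Definition flip n (v : cube n) (i : 'I_n) : cube n :=
  [ffun j => if j == i then ~~ v j else v j].

Definition nbhd n (v : cube n) : {set cube n} := [set flip v i | i : 'I_n].

From mathcomp Require Import all_boot.
From mathcomp Require Import zify.
Set Implicit Arguments. Unset Strict Implicit. Unset Printing Implicit Defensive.

(* Suppose no neighbour of v lies in sigma, and record each w in sigma by the
   set D(w) of places where it differs from v.  Maximality makes every place
   avoided by some D(w) of size 3, and the diameter bound makes any D(w) lose at
   most one place against such a triple.  These two properties squeeze all the
   triples into a set of at most 4 places; for a place z outside it, a D(w)
   containing z also contains a second place t (else w = v^z), and a triple
   avoiding t then misses both z and t. *)

Section TripleFamily.

Variables (T : finType) (F : {set {set T}}).
Hypothesis card_F : forall A, A \in F -> #|A| = 3.
Hypothesis cardD_F : forall A B, A \in F -> B \in F -> #|A :\: B| <= 1.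
Hypothesis avoid_F : forall x, exists2 A, A \in F & x \notin A.

Lemma setD1_subset_of_cardD_le1 (A B : {set T}) x :
  #|A :\: B| <= 1 -> x \in A -> x \notin B -> A :\ x \subset B.
Proof.
move=> /card_le1_eqP AB1 xA xB; apply/subsetP => y; rewrite !inE => /andP[yx yA].
apply: contraTT yx => yB; rewrite negbK; apply/eqP; apply: (AB1 x y);
  by rewrite inE ?yA ?xA ?yB ?xB.
Qed.

Lemma triple_family_sub A B x :
  A \in F -> B \in F -> x \in A -> x \notin B -> forall C, C \in F -> C \subset A :|: B.
Proof.
move=> AF BF xA xB C CF; apply/subsetP => c cC; apply: contraT => cAB.
have [cA cB] : c \notin A /\ c \notin B by move: cAB; rewrite inE negb_or => /andP[].
have [a aC] : exists a, a \in C :\ c.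
  by apply/set0Pn; rewrite -card_gt0 -(ltn_add2l (c \in C)) -cardsD1 card_F // cC.
have [aA aB] : a \in A /\ a \in B.
  by split; apply: subsetP aC; apply: setD1_subset_of_cardD_le1 => //; apply: cardD_F.
have [D DF aD] := avoid_F a.
have subD X : X \in F -> a \in X -> X :\ a \subset D.
  by move=> XF aX; apply: setD1_subset_of_cardD_le1 => //; apply: cardD_F.
have ABC_sub : (A :|: B :|: C) :\ a \subset D.
  rewrite !setDUl !subUset !subD //; by move: aC; rewrite inE => /andP[].
have card_AB : 3 < #|A :|: B|.
  by rewrite -(card_F BF) proper_card // properUr //; apply/subsetPn; exists x.
have card_ABC : #|A :|: B| < #|A :|: B :|: C|.
  by rewrite proper_card // properUl //; apply/subsetPn; exists c.
have := subset_leq_card ABC_sub; rewrite (card_F DF) => card_sub.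
move: card_ABC; rewrite (cardsD1 a (A :|: B :|: C)) in_setU in_setU aA /= add1n ltnS.
by move/leq_trans/(_ card_sub); rewrite leqNgt card_AB.
Qed.

Lemma cardU_triple_family A B : A \in F -> B \in F -> #|A :|: B| <= 4.
Proof.
move=> AF BF; have := cardsUI A B; have := cardsID A B; have := cardD_F BF AF.
rewrite [B :&: A]setIC (card_F AF) (card_F BF); lia.
Qed.

End TripleFamily.

Definition diffset n (v w : cube n) := [set i : 'I_n | v i != w i].

Lemma hdist_sym n (x y : cube n) : hdist x y = hdist y x.
Proof. by apply: eq_card => i; rewrite !inE eq_sym. Qed.

Lemma hdistxx n (x : cube n) : hdist x x = 0.
Proof. by apply: eq_card0 => i; rewrite !inE eqxx. Qed.

Lemma diffset_flip n (v w : cube n) (i : 'I_n) :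
  diffset (flip v i) w =
    if i \in diffset v w then diffset v w :\ i else i |: diffset v w.
Proof.
apply/setP => j; case: ifP => iD; rewrite !inE ffunE;
  case: (eqVneq j i) => [->|] //=; by move: iD; rewrite inE; case: (v i) (w i) => [] [].
Qed.

Lemma flip_diffset n (v w : cube n) (i : 'I_n) : diffset v w = [set i] -> w = flip v i.
Proof.
move=> /setP Dvw; apply/ffunP => j; rewrite ffunE; have := Dvw j; rewrite !inE.
by case: (eqVneq j i) => [->|_]; case: (v _) (w _) => [] [].
Qed.

Lemma hdist_diffsetI n (v w1 w2 : cube n) :
  hdist w1 w2 + 2 * #|diffset v w1 :&: diffset v w2| = hdist v w1 + hdist v w2.
Proof.
set D1 := diffset v w1; set D2 := diffset v w2.
have -> : hdist w1 w2 = #|(D1 :|: D2) :\: (D1 :&: D2)|.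
  by apply: eq_card => i; rewrite !inE; case: (v i) (w1 i) (w2 i) => [] [] [].
have sIU : D1 :&: D2 \subset D1 :|: D2 by apply/subsetP => i; rewrite !inE => /andP[->].
by rewrite cardsDS // -cardsUI mul2n -addnn addnA subnK ?subset_leq_card.
Qed.

Lemma card_diffsetD_le1 n (v w1 w2 : cube n) :
  hdist w1 w2 <= 3 -> hdist v w1 <= 3 -> hdist v w2 = 3 ->
  #|diffset v w1 :\: diffset v w2| <= 1.
Proof.
move=> h12 h1 h2; have := hdist_diffsetI v w1 w2; rewrite cardsD.
have : #|diffset v w1 :&: diffset v w2| <= hdist v w1.
  by apply: subset_leq_card; apply: subsetIl.
rewrite -/(hdist v w1); lia.
Qed.

Lemma maximal_simplex_far n (s : {set cube n}) x :
  is_maximal_simplex s -> x \notin s -> exists2 w, w \in s & 3 < hdist x w.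
Proof.
move=> [simp maxs] xs.
have [/exists_inP //|/exists_inPn far] := boolP [exists w in s, 3 < hdist x w].
have far' w : w \in s -> hdist x w <= 3 by move=> /far; rewrite -leqNgt.
have simp_x : is_simplex (x |: s).
  move=> a b; rewrite !inE => /orP[/eqP->|aS] /orP[/eqP->|bS].
  - by rewrite hdistxx.
  - exact: far'.
  - by rewrite hdist_sym; apply: far'.
  - exact: simp.
by move: xs; rewrite -(maxs _ simp_x (subsetUr _ _)) setU11.
Qed.

Lemma flip_far_triple n (s : {set cube n}) (v : cube n) (i : 'I_n) :
  is_maximal_simplex s -> v \in s -> flip v i \notin s ->
  exists2 w, w \in s & hdist v w = 3 /\ i \notin diffset v w.
Proof.
move=> maxs vs fs; have [w ws] := maximal_simplex_far maxs fs.
have vw : #|diffset v w| <= 3 := maxs.1 v w vs ws.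
change (3 < #|diffset (flip v i) w| ->
        exists2 w, w \in s & hdist v w = 3 /\ i \notin diffset v w).
rewrite diffset_flip; case: ifPn => iD far.
  by move: far vw; rewrite (cardsD1 i (diffset v w)) iD /=; lia.
exists w => //; split => //; apply/eqP; rewrite eqn_leq vw.
by move: far; rewrite cardsU1 iD add1n ltnS.
Qed.

Lemma covers_diffset n (s : {set cube n}) (v : cube n) (i : 'I_n) :
  covers_all_places s -> exists2 w, w \in s & i \in diffset v w.
Proof.
move=> /(_ i) [a [b [aS bS ai bi]]].
by case vi : (v i); [exists b | exists a]; rewrite // inE vi ?ai ?bi.
Qed.

Lemma diffset_second n (v w : cube n) (i : 'I_n) :
  i \in diffset v w -> w != flip v i -> exists2 j, j != i & j \in diffset v w.
Proof.
move=> iD /eqP wf.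
pose other := [exists j, (j != i) && (j \in diffset v w)].
have [/existsP[j /andP[ji jD]]|/existsPn noj] := boolP other; first by exists j.
exfalso; apply/wf/flip_diffset/setP => j; rewrite in_set1.
by case: eqVneq => [->//|ji]; apply/negbTE; have := noj j; rewrite ji.
Qed.

Section NoNeighbour.

Variables (n : nat) (s : {set cube n}) (v : cube n).
Hypotheses (maxs : is_maximal_simplex s) (vs : v \in s).
Hypothesis flip_notin : forall i, flip v i \notin s.

Definition triples := [set diffset v w | w in s & hdist v w == 3].

Lemma card_triples A : A \in triples -> #|A| = 3.
Proof. by move=> /imsetP[w]; rewrite inE => /andP[_ /eqP] ? ->. Qed.

Lemma card_diffsetD_triples w A : w \in s -> A \in triples -> #|diffset v w :\: A| <= 1.
Proof.
move=> ws /imsetP[b]; rewrite inE => /andP[bs /eqP b3] ->.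
by apply: card_diffsetD_le1; rewrite ?b3 //; apply: maxs.1.
Qed.

Lemma cardD_triples A B : A \in triples -> B \in triples -> #|A :\: B| <= 1.
Proof. by move=> /imsetP[w]; rewrite inE => /andP[ws _] ->; apply: card_diffsetD_triples. Qed.

Lemma avoid_triples i : exists2 A, A \in triples & i \notin A.
Proof.
have [w ws [w3 iw]] := flip_far_triple maxs vs (flip_notin i).
by exists (diffset v w) => //; apply: imset_f; rewrite inE ws w3.
Qed.

End NoNeighbour.

Theorem mainTheorem6 (n : nat) (s : {set cube n}) :
  5 <= n -> is_maximal_simplex s -> covers_all_places s ->
  forall v, v \in s -> nbhd v :&: s != set0.
Proof.
move=> n5 maxs cov v vs; apply: contraT; rewrite negbK => /eqP nbhd0.
have flip_notin i : flip v i \notin s.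
  apply/negP => fs; have : flip v i \in nbhd v :&: s by rewrite inE fs andbT imset_f.
  by rewrite nbhd0 inE.
have card_F := @card_triples n s v.
have cardD_F := cardD_triples maxs vs.
have avoid_F := avoid_triples maxs vs flip_notin.
have [A AF _] := avoid_F (Ordinal (leq_trans (isT : 0 < 5) n5)).
have [a aA] : exists a, a \in A by apply/set0Pn; rewrite -card_gt0 card_F.
have [B BF aB] := avoid_F a.
have [z] : exists z, z \in ~: (A :|: B).
  apply/set0Pn; rewrite -card_gt0; have := cardsC (A :|: B).
  have := cardU_triple_family card_F cardD_F AF BF; rewrite card_ord; lia.
rewrite inE => zAB; have [w ws zw] := covers_diffset v z cov.
have [t tz tw] := diffset_second zw (memPn (flip_notin z) w ws).
have [G GF tG] := avoid_F t.
have zG : z \notin G.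
  have GAB := triple_family_sub card_F cardD_F avoid_F AF BF aA aB GF.
  by apply: contra zAB; apply: (subsetP GAB).
have /card_le1_eqP/(_ z t) := card_diffsetD_triples maxs vs ws GF.
by rewrite !in_setD zG tG zw tw => /(_ isT isT) tz_eq; rewrite tz_eq eqxx in tz.
Qed.
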